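(* Let $R$ be a Bézout domain and let $A,B,C\in R^{n\times n}$ satisfy $ABA=ACA$. If $R_r(AB)=R_r(ABA)$ and $R_r(CA)=R_r(CAB)$, then $AB$ is similar to $CA$.
   Context: A Bézout domain is an integral domain in which every finitely generated ideal is principal. For $M\in R^{m\times n}$, $R_r(M)=\{Mx : x\in R^{n\times 1}\}\subseteq R^{m\times 1}$ is the column space of $M$. Two matrices $M,N\in R^{n\times n}$ are similar if $M=S^{-1}NS$ for some invertible $S\in R^{n\times n}$. *)

From HB Require Import structures.
From mathcomp Require Import all_boot all_order all_algebra.
Set Implicit Arguments. Unset Strict Implicit. Unset Printing Implicit Defensive.
Import GRing.Theory.
Local Open Scope ring_scope.

Definition in_fg_ideal (R : comNzRingType) (s : seq R) (x : R) : Prop :=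
  exists c : seq R, size c = size s /\ x = \sum_(i < size s) c`_i * s`_i.

Definition in_principal_ideal (R : comNzRingType) (d x : R) : Prop :=
  exists r : R, x = r * d.

Definition bezout_domain (R : idomainType) : Prop :=
  forall s : seq R, exists d : R,
    forall x : R, in_fg_ideal s x <-> in_principal_ideal d x.

Definition colspace (R : comNzRingType) (m n : nat) (M : 'M[R]_(m, n))
  (v : 'cV[R]_m) : Prop := exists x : 'cV[R]_n, v = M *m x.

Definition same_colspace (R : comNzRingType) (m n p : nat)
  (M : 'M[R]_(m, n)) (N : 'M[R]_(m, p)) : Prop :=
  forall v : 'cV[R]_m, colspace M v <-> colspace N v.

Definition similar_mx (R : comUnitRingType) (n : nat) (M N : 'M[R]_n) : Prop :=
  exists S : 'M[R]_n, S \in unitmx /\ M = invmx S *m N *m S.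

(* Write P = AB and Q = CA.  The column-space hypotheses give P = P^2 Z and
   Q = Q^2 W, which over a domain force P and Q to have group inverses g and k
   (Cayley-Hamilton supplies the missing left factorisation, up to a nonzero
   scalar).  The matrix Y = CAB g^2 satisfies AY = Pg, YA = Qk and QY = YP, so
   the idempotents Pg and Qk are algebraically equivalent and Y intertwines P
   and Q on their images.  Over a Bezout domain images and kernels of
   idempotent matrices are free, and equivalent idempotents have images, hence
   kernels, of equal rank; gluing Y on the image of Pg with an isomorphism
   between the kernels gives an invertible S with SP = QS. *)

From mathcomp Require Import all_boot all_order all_algebra fraction.
Set Implicit Arguments. Unset Strict Implicit. Unset Printing Implicit Defensive.
Import GRing.Theory.
Local Open Scope ring_scope.

Section GroupInverse.
Variable T : pzRingType.

Definition group_inverse (p g : T) : Prop :=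
  [/\ p * g = g * p, g * p * g = g & p * g * p = p].

Section Properties.
Variables p g : T.
Hypothesis pg : group_inverse p g.

Lemma group_inverse_sqmul : g * g * p = g.
Proof. by case: pg => comm gpg _; rewrite -mulrA -comm mulrA gpg. Qed.

Lemma group_inverse_mulsq : p * g * g = g.
Proof. by case: pg => comm gpg _; rewrite comm gpg. Qed.

Lemma group_inverse_idem : p * g * (p * g) = p * g.
Proof. by case: pg => _ _ pgp; rewrite mulrA pgp. Qed.

Lemma group_inverse_mulK : p * (p * g) = p.
Proof. by case: pg => comm _ pgp; rewrite comm mulrA pgp. Qed.

End Properties.

Lemma group_inverse_intertwine (p q a g k : T) :
  group_inverse p g -> group_inverse q k -> p * a = a * q -> g * a = a * k.
Proof.
move=> pg qk pa.
have ak : a * k = p * a * k * k.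
  by rewrite -{1}(group_inverse_mulsq qk) !mulrA pa.
have aq : a * q = p * p * a * k.
  by rewrite -{1}(group_inverse_mulK qk) !mulrA -pa -(mulrA p a q) -pa mulrA.
have gpp : g * p * p = p by case: pg => <- _ ->.
rewrite -{1}(group_inverse_sqmul pg) -mulrA pa aq !mulrA group_inverse_sqmul //.
by rewrite -(mulrA _ a k) ak !mulrA gpp.
Qed.

Section Transfer.
Variables (p q a v g k : T).
Hypotheses (pg : group_inverse p g) (qk : group_inverse q k).
Hypotheses (pa : p * a = a * q) (av : a * v = p * p).
Hypotheses (qv : q * v = v * p) (va : v * a = q * q).

Definition transfer : T := v * g * g.

Lemma transfer_mulr : a * transfer = p * g.
Proof. by rewrite /transfer !mulrA av -(mulrA p p g) (group_inverse_mulK pg). Qed.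

Lemma transfer_mull : transfer * a = q * k.
Proof.
have ga := group_inverse_intertwine pg qk pa.
rewrite /transfer -mulrA ga mulrA -(mulrA v g a) ga !mulrA va.
by rewrite -(mulrA q q k) (group_inverse_mulK qk).
Qed.

Lemma transfer_intertwine : q * transfer = transfer * p.
Proof.
rewrite /transfer !mulrA qv -!mulrA (mulrA p g g) (group_inverse_mulsq pg).
by rewrite -{1}(group_inverse_sqmul pg) !mulrA.
Qed.

End Transfer.
End GroupInverse.

Lemma scalemxI (R : idomainType) m n (c : R) (X Y : 'M[R]_(m, n)) :
  c != 0 -> c *: X = c *: Y -> X = Y.
Proof.
move=> c_nz /matrixP cXY; apply/matrixP => i j.
by apply: (mulfI c_nz); have := cXY i j; rewrite !mxE.
Qed.

Lemma scaled_left_sq_factor (R : idomainType) n (P Z : 'M[R]_n.+1) :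
  P = P * P * Z -> exists c s, c != 0 /\ c *: P = s * P * P.
Proof.
move=> PZ.
have [m /= [q q0_nz chiP]] := multiplicity_XsubC (char_poly P) 0.
rewrite monic_neq0 ?char_poly_monic //= in q0_nz.
have qPm : horner_mx P q * P ^+ m = 0.
  by have := Cayley_Hamilton P; rewrite chiP subr0 rmorphM rmorphXn /= horner_mx_X.
have Ppow k : P = P ^+ k.+1 * Z ^+ k.
  elim: k => [|k IHk]; first by rewrite expr1 expr0 mulr1.
  by rewrite {1}PZ {2}IHk !mulrA -exprS -mulrA -exprSr.
have qP : horner_mx P q * P = 0.
  by rewrite {2}(Ppow m) exprSr !mulrA qPm !mul0r.
set c := q`_0.
have [q2 qE] : exists q2, q = q2 * 'X + c%:P.
  have /factor_theorem[q2 q2E] : root (q - c%:P) 0.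
    by rewrite /root hornerD hornerN hornerC horner_coef0 subrr.
  by exists q2; rewrite polyC0 subr0 in q2E; rewrite -q2E subrK.
exists c, (- horner_mx P q2); split; first by rewrite /c -horner_coef0.
have cP : c%:M * P = c *: P by rewrite -mulmxE mul_scalar_mx.
move: qP; rewrite qE rmorphD rmorphM /= horner_mx_X horner_mx_C mulrDl cP.
by move/eqP; rewrite addrC addr_eq0 => /eqP ->; rewrite !mulNr.
Qed.

Lemma group_inverse_of_sq_factor (R : idomainType) n (P Z : 'M[R]_n) :
  P = P * P * Z -> exists g, group_inverse P g.
Proof.
case: n P Z => [|n] P Z PZ.
  by exists 0; split; rewrite [LHS]flatmx0 [RHS]flatmx0.
have [c [s [c_nz cP]]] := scaled_left_sq_factor PZ.
have PPZ X : X * P * P * Z = X * P by rewrite -!mulrA [P * (P * Z)]mulrA -PZ.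
have PZP : P * Z * P = P.
  by apply: (scalemxI c_nz); rewrite !scalerAl cP PPZ.
have PZZP : P * Z * Z * P = P * Z.
  apply: (scalemxI c_nz); rewrite !scalerAl cP PPZ.
  by rewrite -!mulrA [P * (Z * P)]mulrA PZP.
have Pg : P * (P * Z * Z) = P * Z by rewrite !mulrA -PZ.
have comm : P * (P * Z * Z) = P * Z * Z * P by rewrite Pg PZZP.
have gPg : P * Z * Z * P * (P * Z * Z) = P * Z * Z.
  by rewrite PZZP !mulrA PZP.
have PgP : P * (P * Z * Z) * P = P by rewrite Pg PZP.
by exists (P * Z * Z); split; [exact: comm | exact: gPg | exact: PgP].
Qed.

Lemma mulmx1_dim_le (R : idomainType) n k (K : 'M[R]_(n, k)) (G : 'M[R]_(k, n)) :
  G *m K = 1%:M -> (k <= n)%N.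
Proof.
move=> GK; pose frac := map_mx (@FracField.tofrac R).
have := mxrankM_maxr (frac _ _ G) (frac _ _ K).
by rewrite -map_mxM GK map_mx1 mxrank1 => /leq_trans; apply; apply: rank_leq_row.
Qed.

Lemma complementary_split_dim (R : idomainType) n r a
    (K : 'M[R]_(n, r)) (G : 'M_(r, n)) (L : 'M_(n, a)) (H : 'M_(a, n)) :
  K *m G + L *m H = 1%:M -> G *m K = 1%:M -> H *m L = 1%:M -> (r + a)%N = n.
Proof.
move=> KGLH GK HL.
have GL : G *m L = 0.
  have : G *m L + G *m L = G *m L.
    by rewrite -{3}[L]mul1mx -KGLH mulmxDl mulmxDr !mulmxA GK mul1mx -mulmxA HL mulmx1.
  by move/eqP; rewrite -subr_eq0 addrK => /eqP.
have HK : H *m K = 0.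
  have : H *m K + H *m K = H *m K.
    by rewrite -{3}[K]mul1mx -KGLH mulmxDl mulmxDr !mulmxA HL mul1mx -mulmxA GK mulmx1.
  by move/eqP; rewrite -subr_eq0 addrK => /eqP.
apply/eqP; rewrite eqn_leq; apply/andP; split.
  apply: (@mulmx1_dim_le _ _ _ (row_mx K L) (col_mx G H)).
  by rewrite mul_col_row GK GL HK HL -scalar_mx_block.
apply: (@mulmx1_dim_le _ _ _ (col_mx G H) (row_mx K L)).
by rewrite mul_row_col.
Qed.

Lemma equiv_split_dim_eq (R : idomainType) n m r r' (X : 'M[R]_(n, m))
    (Y : 'M_(m, n)) (K : 'M_(n, r)) (G : 'M_(r, n)) (K' : 'M_(m, r')) (G' : 'M_(r', m)) :
  X *m Y = K *m G -> Y *m X = K' *m G' -> G *m K = 1%:M -> G' *m K' = 1%:M -> r = r'.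
Proof.
move=> XY YX GK GK'.
have GXK'G'YK : G *m X *m K' *m (G' *m Y *m K) = 1%:M.
  rewrite !mulmxA -(mulmxA _ K' G') -YX !mulmxA -(mulmxA _ X Y) XY.
  by rewrite -(mulmxA G X Y) XY !mulmxA !(GK, mul1mx).
have G'YKGXK' : G' *m Y *m K *m (G *m X *m K') = 1%:M.
  rewrite !mulmxA -(mulmxA _ K G) -XY !mulmxA -(mulmxA _ Y X) YX.
  by rewrite -(mulmxA G' Y X) YX !mulmxA !(GK', mul1mx).
by apply/eqP; rewrite eqn_leq (mulmx1_dim_le GXK'G'YK) (mulmx1_dim_le G'YKGXK').
Qed.

Lemma in_fg_ideal_enum (R : comNzRingType) n (f : 'I_n -> R) x :
  in_fg_ideal [seq f i | i <- enum 'I_n] x <-> exists w : 'I_n -> R, x = \sum_i w i * f i.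
Proof.
set s := [seq f i | i <- enum 'I_n].
have size_s : size s = n by rewrite size_map size_enum_ord.
have sum_s (F : nat -> R) : \sum_(i < size s) F i = \sum_(i < n) F i :> R.
  by rewrite -(big_mkord xpredT F) size_s big_mkord.
have nth_s (i : 'I_n) : s`_i = f i by rewrite (nth_map i) ?size_enum_ord // nth_ord_enum.
split=> [[c [_ ->]] | [w ->]].
  exists (fun i => c`_i); rewrite (sum_s (fun i => c`_i * s`_i)).
  by apply: eq_bigr => i _; rewrite nth_s.
exists [seq w i | i <- enum 'I_n]; split; first by rewrite !size_map.
rewrite (sum_s (fun i => [seq w i | i <- enum 'I_n]`_i * s`_i)).
by apply: eq_bigr => i _; rewrite nth_s (nth_map i) ?size_enum_ord // nth_ord_enum.
Qed.

Section ComplementSplit.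
Variables (R : pzRingType) (n a : nat) (E : 'M[R]_n) (L : 'M[R]_(n, a)) (H : 'M[R]_(a, n)).
Hypotheses (EE : E *m E = E) (LH : L *m H = 1%:M - E) (HL : H *m L = 1%:M).

Lemma compl_split_mulr : E *m L = 0.
Proof. by rewrite -[L]mulmx1 -HL !mulmxA -(mulmxA E L H) LH mulmxBr mulmx1 EE subrr !mul0mx. Qed.

Lemma compl_split_mull : H *m E = 0.
Proof. by rewrite -[H]mul1mx -HL -(mulmxA H L H) LH -mulmxA mulmxBl mul1mx EE subrr mulmx0. Qed.

End ComplementSplit.

Lemma glue_complements_inverse (R : pzRingType) n a (E F X Y : 'M[R]_n)
    (L : 'M_(n, a)) (H : 'M_(a, n)) (L' : 'M_(n, a)) (H' : 'M_(a, n)) :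
  E *m E = E -> F *m F = F -> X *m Y = E -> Y *m X = F ->
  L *m H = 1%:M - E -> L' *m H' = 1%:M - F -> H' *m L' = 1%:M ->
  (X *m F + L *m H') *m (Y *m E + L' *m H) = 1%:M.
Proof.
move=> EE FF XY YX LH LH' HL'.
have FL' : F *m L' = 0 := compl_split_mulr FF LH' HL'.
have H'F : H' *m F = 0 := compl_split_mull FF LH' HL'.
have YE : Y *m E = F *m Y by rewrite -XY -YX mulmxA.
have XFYE : X *m F *m (Y *m E) = E.
  by rewrite -YX !mulmxA XY -(mulmxA E X Y) XY !EE.
have XFL'H : X *m F *m (L' *m H) = 0.
  by rewrite mulmxA -(mulmxA X F L') FL' mulmx0 mul0mx.
have LH'YE : L *m H' *m (Y *m E) = 0.
  by rewrite YE mulmxA -(mulmxA L H' F) H'F mulmx0 mul0mx.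
have LH'L'H : L *m H' *m (L' *m H) = 1%:M - E.
  by rewrite mulmxA -(mulmxA L H' L') HL' mulmx1 LH.
by rewrite mulmxDl !mulmxDr XFYE XFL'H LH'YE LH'L'H addr0 add0r addrC subrK.
Qed.

Section Bezout.
Variables (R : idomainType) (bezoutR : bezout_domain R).

Lemma bezout_unimodular_factor n (v : 'cV[R]_n) : v != 0 ->
  exists d (u : 'cV_n) (w : 'rV_n), [/\ d != 0, v = d *: u & w *m u = 1%:M].
Proof.
move=> v_nz; have [d dP] := bezoutR [seq v i 0 | i <- enum 'I_n].
have /fin_all_exists[c vE] i : exists c, v i 0 = c * d.
  apply/dP/in_fg_ideal_enum; exists (fun j => (j == i)%:R).
  by rewrite (bigD1 i) //= eqxx mul1r big1 ?addr0 // => j /negPf ->; rewrite mul0r.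
have d_nz : d != 0.
  move: v_nz; apply: contra_neq => d0; apply/matrixP => i j.
  by rewrite ord1 vE d0 mulr0 mxE.
have /in_fg_ideal_enum[w dE] : in_fg_ideal [seq v i 0 | i <- enum 'I_n] d.
  by apply/dP; exists 1; rewrite mul1r.
exists d, (\col_i c i), (\row_i w i); split=> //.
  by apply/matrixP => i j; rewrite ord1 !mxE vE mulrC.
apply/matrixP => i j; rewrite !ord1 !mxE; apply: (mulIf d_nz).
rewrite mul1r [in RHS]dE mulr_suml; apply: eq_bigr => k _.
by rewrite !mxE vE mulrA.
Qed.

Lemma idem_unimodular n (E : 'M[R]_n) : E *m E = E -> E != 0 ->
  exists (u : 'cV_n) (phi : 'rV_n), [/\ E *m u = u, phi *m E = phi & phi *m u = 1%:M].
Proof.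
move=> EE E_nz.
have [j colj_nz] : exists j, col j E != 0.
  apply/existsP; apply: contraNT E_nz => /existsPn colE0; apply/eqP/matrixP => i j.
  by have /negPn/eqP/matrixP/(_ i 0) := colE0 j; rewrite !mxE.
have [d [u [w [d_nz colj wu]]]] := bezout_unimodular_factor colj_nz.
have Eu : E *m u = u.
  by apply: (scalemxI d_nz); rewrite scalemxAr -colj !colE mulmxA EE.
exists u, (w *m E); split=> //; first by rewrite -mulmxA EE.
by rewrite -mulmxA Eu.
Qed.

Definition idem_split_part n k (E : 'M[R]_n) (K : 'M_(n, k)) (G : 'M_(k, n))
    (E' : 'M_n) : Prop :=
  [/\ G *m K = 1%:M, E = K *m G + E', E' *m E' = E', E' *m K = 0 & G *m E' = 0].

Lemma idem_split_part_step n k (E : 'M[R]_n) (K : 'M_(n, k)) G E' :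
  idem_split_part E K G E' -> E' != 0 ->
  exists (K2 : 'M_(n, 1 + k)) G2 E2, idem_split_part E K2 G2 E2.
Proof.
move=> [GK EKG E'E' E'K GE'] E'_nz.
have [u [phi [E'u phiE' phiu]]] := idem_unimodular E'E' E'_nz.
have phiK : phi *m K = 0 by rewrite -phiE' -mulmxA E'K mulmx0.
have Gu : G *m u = 0 by rewrite -E'u mulmxA GE' mul0mx.
exists (row_mx u K), (col_mx phi G), (E' - u *m phi); split.
- by rewrite mul_col_row phiu phiK Gu GK -scalar_mx_block.
- by rewrite mul_row_col EKG [RHS]addrC addrA subrK addrC.
- rewrite mulmxBl !mulmxBr E'E' mulmxA E'u -mulmxA phiE' mulmxA.
  by rewrite -(mulmxA u phi u) phiu mulmx1 subrr subr0.
- rewrite mul_mx_row !mulmxBl E'u E'K -!mulmxA phiu phiK mulmx1 mulmx0.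
  by rewrite !subrr row_mx0.
- rewrite mul_col_mx !mulmxBr phiE' GE' !mulmxA phiu Gu mul1mx mul0mx.
  by rewrite !subrr col_mx0.
Qed.

Lemma idem_split n (E : 'M[R]_n) : E *m E = E ->
  exists r (K : 'M_(n, r)) (G : 'M_(r, n)), K *m G = E /\ G *m K = 1%:M.
Proof.
move=> EE.
have grow j : (exists r (K : 'M_(n, r)) (G : 'M_(r, n)), K *m G = E /\ G *m K = 1%:M)
    \/ exists (K : 'M_(n, j)) G E', idem_split_part E K G E'.
  elim: j => [|j [done | [K [G [E' part]]]]]; [right | by left |].
    exists 0, 0, E; split; rewrite ?mul0mx ?mulmx0 ?add0r //.
    by rewrite [1%:M]flatmx0.
  have [E'0 | E'_nz] := eqVneq E' 0.
    by case: part => GK EKG _ _ _; left; exists j, K, G; rewrite EKG E'0 addr0.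
  by right; apply: idem_split_part_step part E'_nz.
(* a free summand of R^n has rank at most n *)
have [// | [K [G [E' [GK _ _ _ _]]]]] := grow n.+1.
by have := mulmx1_dim_le GK; rewrite ltnn.
Qed.

Lemma equiv_idem_compl_dim_eq n a b (E F X Y : 'M[R]_n) (L : 'M_(n, a)) (H : 'M_(a, n))
    (L' : 'M_(n, b)) (H' : 'M_(b, n)) :
  E *m E = E -> F *m F = F -> X *m Y = E -> Y *m X = F ->
  L *m H = 1%:M - E -> H *m L = 1%:M -> L' *m H' = 1%:M - F -> H' *m L' = 1%:M ->
  a = b.
Proof.
move=> EE FF XY YX LH HL LH' HL'.
have [r [K [G [KG GK]]]] := idem_split EE.
have [r' [K' [G' [KG' GK']]]] := idem_split FF.
have rr' : r = r'.
  by rewrite -KG in XY; rewrite -KG' in YX; apply: equiv_split_dim_eq XY YX GK GK'.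
have dimE : (r + a)%N = n.
  by apply: (complementary_split_dim _ GK HL); rewrite KG LH addrC subrK.
have dimF : (r' + b)%N = n.
  by apply: (complementary_split_dim _ GK' HL'); rewrite KG' LH' addrC subrK.
by apply/eqP; rewrite -(eqn_add2l r) dimE rr' dimF.
Qed.

Lemma similar_of_equiv_idem n (E F X Y P Q : 'M[R]_n) :
  E *m E = E -> F *m F = F -> X *m Y = E -> Y *m X = F ->
  E *m P = P -> P *m E = P -> Q *m F = Q -> Q *m Y = Y *m P ->
  similar_mx P Q.
Proof.
move=> EE FF XY YX EP PE QF QY.
have idem_compl (D : 'M[R]_n) : D *m D = D -> (1%:M - D) *m (1%:M - D) = 1%:M - D.
  by move=> DD; rewrite mulmxBl !mulmxBr !mul1mx mulmx1 DD subrr subr0.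
have [a [L [H [LH HL]]]] := idem_split (idem_compl E EE).
have [b [L' [H' [LH' HL']]]] := idem_split (idem_compl F FF).
have ab := equiv_idem_compl_dim_eq EE FF XY YX LH HL LH' HL'; subst b.
pose S := Y *m E + L' *m H.
have S'S := glue_complements_inverse EE FF XY YX LH LH' HL'.
have HP : H *m P = 0 by rewrite -EP mulmxA (compl_split_mull EE LH HL) mul0mx.
have QL' : Q *m L' = 0 by rewrite -QF -mulmxA (compl_split_mulr FF LH' HL') mulmx0.
have SP : S *m P = Q *m S.
  rewrite mulmxDl mulmxDr -!mulmxA HP EP mulmx0 addr0.
  by rewrite !mulmxA QL' mul0mx addr0 QY -mulmxA PE.
have [_ S_unit] := mulmx1_unit S'S.
by exists S; split; rewrite // -mulmxA -SP mulmxA mulVmx ?mul1mx.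
Qed.

Lemma similar_of_transfer n (P Q A V g k : 'M[R]_n) :
  group_inverse P g -> group_inverse Q k ->
  P * A = A * Q -> A * V = P * P -> Q * V = V * P -> V * A = Q * Q ->
  similar_mx P Q.
Proof.
move=> pg qk pa av qv va.
apply: (similar_of_equiv_idem (E := P * g) (F := Q * k) (X := A) (Y := transfer V g));
  rewrite !mulmxE.
- exact: group_inverse_idem pg.
- exact: group_inverse_idem qk.
- exact: transfer_mulr.
- exact: transfer_mull pg qk pa va.
- by case: pg.
- exact: group_inverse_mulK pg.
- exact: group_inverse_mulK qk.
- exact: transfer_intertwine.
Qed.

End Bezout.

Lemma colspace_factor (R : comNzRingType) m n p (M : 'M[R]_(m, n)) (N : 'M[R]_(m, p)) :
  (forall v, colspace M v -> colspace N v) -> exists X, M = N *m X.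
Proof.
move=> MN; have /fin_all_exists[x colM] j : exists x, col j M = N *m x.
  by have [x ->] := MN (col j M) (ex_intro _ (delta_mx j 0) (colE j M)); exists x.
exists (\matrix_(i, j) x j i 0); apply/matrixP => i j.
have /matrixP/(_ i 0) := colM j; rewrite !mxE => ->.
by apply: eq_bigr => l _; rewrite !mxE.
Qed.

Theorem theorem2p4 (R : idomainType) (hR : bezout_domain R) (n : nat)
  (A B C : 'M[R]_n) :
  A *m B *m A = A *m C *m A ->
  same_colspace (A *m B) (A *m B *m A) ->
  same_colspace (C *m A) (C *m A *m B) ->
  similar_mx (A *m B) (C *m A).
Proof.
move=> ABA colAB colCA.
have [X ABX] := colspace_factor (fun v => (colAB v).1).
have [Y CAY] := colspace_factor (fun v => (colCA v).1).
rewrite !mulmxE in ABA ABX CAY *.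
have ABAl D : D * A * B * A = D * A * C * A.
  by rewrite -!mulrA [A * (B * A)]mulrA ABA -!mulrA.
have ABsq : A * B = A * B * (A * B) * (Y * X).
  by rewrite {1}ABX ABA -(mulrA A C A) CAY !mulrA -ABA.
have CAsq : C * A = C * A * (C * A) * (B * Y * X * Y).
  by rewrite {1}CAY -(mulrA C A B) ABsq !mulrA ABAl.
have [g ABg] := group_inverse_of_sq_factor ABsq.
have [k CAk] := group_inverse_of_sq_factor CAsq.
have PA : A * B * A = A * (C * A) by rewrite ABA mulrA.
have AV : A * (C * A * B) = A * B * (A * B) by rewrite !mulrA -ABA.
have QV : C * A * (C * A * B) = C * A * B * (A * B) by rewrite !mulrA ABAl.
have VA : C * A * B * A = C * A * (C * A) by rewrite ABAl mulrA.
exact (similar_of_transfer hR ABg CAk PA AV QV VA).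
Qed.
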